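(* Let $G$ be a fair complete tripartite graph on an even number of vertices whose edges are coloured red and blue. Then there are two vertex-disjoint connected matchings of distinct colours (one red, one blue) that together cover all vertices of $G$.
   Context: A complete tripartite graph has three non-empty partition classes; it is fair if no partition class contains more than half of the vertices. The edge colouring is an arbitrary red/blue assignment. A monochromatic matching is called connected if all its edges lie in a single connected component of the subgraph formed by the edges of that colour. Matchings may be empty. *)

From mathcomp Require Import all_boot.
Set Implicit Arguments. Unset Strict Implicit. Unset Printing Implicit Defensive.

Definition tri_adj (T : finType) (part : T -> 'I_3) : rel T :=
  fun x y => part x != part y.

(* Red/blue edge colouring: c x y = true means edge xy is red
   (c is required to be symmetric in the theorem). *)
Definition red_rel (T : finType) (part : T -> 'I_3) (c : T -> T -> bool) : rel T :=
  fun x y => tri_adj part x y && c x y.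
Definition blue_rel (T : finType) (part : T -> 'I_3) (c : T -> T -> bool) : rel T :=
  fun x y => tri_adj part x y && ~~ c x y.

Definition is_matching (T : finType) (r : rel T) (M : {set {set T}}) : Prop :=
  (forall e, e \in M -> exists x y, [/\ x != y, r x y & e = [set x; y]])
  /\ trivIset M.

(* Connected matching: all its edges lie in one connected component of the
   graph with edge relation r (the colour class). Empty matchings allowed. *)
Definition connected_matching (T : finType) (r : rel T) (M : {set {set T}}) : Prop :=
  is_matching r M /\
  (forall e f x y, e \in M -> f \in M -> x \in e -> y \in f -> connect r x y).

From mathcomp Require Import all_boot perm zify.
Set Implicit Arguments. Unset Strict Implicit. Unset Printing Implicit Defensive.

(* A fair complete tripartite graph with an even number n of vertices has a
   perfect matching f: sort the vertices by class and pair the i-th with the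
   (i + n/2)-th. If the red edges of G lie in at least two red components, the
   blue graph is connected: with three nonempty classes, every vertex of one red
   component is joined to every vertex outside it by a blue path of length at
   most three. The blue edges of f then form a connected matching, and the red
   ones are made connected by descent: if two red f-edges ab, cd lie in
   different red components, the crosswise edges between {a,b} and {c,d} are
   blue, and re-pairing along them lowers the number of red f-edges. If instead
   all red edges lie in one red component, exchange the colours. *)

Section FairPairing.
Variables (T : finType) (k : nat) (part : T -> 'I_k).

Definition pairing (f : T -> T) := involutive f /\ forall x, part x != part (f x).

Lemma pairing_neq f x : pairing f -> x != f x.
Proof. by case=> _ /(_ x); apply: contraNneq => <-. Qed.

Lemma sorted_part_window (s : seq T) (x0 : T) (lo h : nat) :
  sorted (fun x y => part x <= part y) s -> lo + h < size s ->
  part (nth x0 s lo) = part (nth x0 s (lo + h)) ->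
  h < count (fun x => part x == part (nth x0 s lo)) s.
Proof.
move=> sorted_s lt_s eq_ends; set p := part (nth x0 s lo).
have le_nth := sorted_leq_nth (fun a b c => @leq_trans (part a) (part b) (part c))
  (fun a => leqnn (part a)) x0 sorted_s.
have window j : lo <= j <= lo + h -> part (nth x0 s j) = p.
  move=> /andP[lo_j j_hi]; apply/val_inj/eqP; rewrite eqn_leq.
  rewrite {1}/p eq_ends !le_nth // inE; lia.
have all_p : all (fun x => part x == p) (take h.+1 (drop lo s)).
  apply/(all_nthP x0) => j; rewrite size_takel ?size_drop; last lia.
  by move=> lt_j; rewrite nth_take // nth_drop window //; lia.
rewrite -(cat_take_drop lo s) count_cat -(cat_take_drop h.+1 (drop lo s)) count_cat.
move: all_p; rewrite all_count size_takel ?size_drop => [/eqP ->|]; lia.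
Qed.

Lemma fair_pairing :
  (forall i : 'I_k, 2 * #|[set x | part x == i]| <= #|T|) -> ~~ odd #|T| ->
  exists f : T -> T, pairing f.
Proof.
move=> fair even_T.
pose s := sort (fun x y => part x <= part y) (enum T).
set n := #|T|; pose h := n./2.
have n_hh : n = h + h by rewrite addnn /h -[n in LHS]odd_double_half (negbTE even_T).
have size_s : size s = n by rewrite size_sort -cardT.
have uniq_s : uniq s by rewrite sort_uniq enum_uniq.
have mem_s x : x \in s by rewrite mem_sort mem_enum.
have count_s i : count (fun x => part x == i) s = #|[set x | part x == i]|.
  rewrite -size_filter -(card_uniqP (filter_uniq _ uniq_s)).
  by apply: eq_card => x; rewrite mem_filter mem_s inE andbT.
have shift_neq x0 lo : lo + h < n -> part (nth x0 s lo) != part (nth x0 s (lo + h)).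
  move=> lt_n; apply/eqP => eq_ends.
  have sorted_s : sorted (fun x y => part x <= part y) s.
    by apply: sort_sorted => x y; exact: leq_total.
  have := sorted_part_window sorted_s; rewrite size_s => /(_ x0 lo h lt_n eq_ends).
  by rewrite count_s; have := fair (part (nth x0 s lo)); lia.
pose f x := nth x s ((index x s + h) %% n).
have index_lt x : index x s < n by rewrite -size_s index_mem.
have index_f x : index (f x) s = (index x s + h) %% n.
  by rewrite index_uniq // size_s ltn_pmod //; have := index_lt x; lia.
exists f; split=> [x | x].
  rewrite {1}/f index_f modnDml -addnA -n_hh modnDr modn_small //.
  exact: nth_index.
rewrite /f -{1}(nth_index x (mem_s x)); set i := index x s.
have := index_lt x; case: (ltnP i h) => [lt_ih | le_hi] lt_in.
  by rewrite modn_small; [apply: shift_neq | ]; lia.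
have -> : (i + h) %% n = i - h.
  by rewrite (_ : i + h = i - h + n); [rewrite modnDr modn_small | ]; lia.
rewrite eq_sym -[in nth x s i](subnK le_hi).
by apply: shift_neq; lia.
Qed.

End FairPairing.

Section Graph.
Variables (T : finType) (r : rel T).

Definition connected_edges := forall x y u v, r x y -> r u v -> connect r x u.

Lemma connected_edgesPn :
  connected_edges \/ exists x y u v, [/\ r x y, r u v & ~~ connect r x u].
Proof.
have [/existsP[x /existsP[y /existsP[u /existsP[v /and3P[rxy ruv nxu]]]]] | none] :=
  boolP [exists x, exists y, exists u, exists v, [&& r x y, r u v & ~~ connect r x u]].
  by right; exists x, y, u, v.
left=> x y u v rxy ruv; apply/negPn/negP => nxu; move/negP: none; apply.
by apply/existsP; exists x; apply/existsP; exists y; apply/existsP; exists u;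
  apply/existsP; exists v; rewrite rxy ruv.
Qed.

Lemma connected_matching_of_involution (f : T -> T) (Q : pred T) :
  symmetric r -> involutive f -> (forall x, x != f x) ->
  (forall x, Q x -> Q (f x)) -> (forall x, Q x -> r x (f x)) ->
  (forall x y, Q x -> Q y -> connect r x y) ->
  connected_matching r [set [set x; f x] | x in Q] /\
  cover [set [set x; f x] | x in Q] = [set x | Q x].
Proof.
move=> r_sym fK f_neq Qf Qr Q_conn.
have con_sym := sym_connect_sym r_sym.
have mem_edge e z : e \in [set [set x; f x] | x in Q] -> z \in e ->
    exists2 x, Q x & connect r z x.
  case/imsetP=> x Qx ->; rewrite !inE => /orP[] /eqP->; exists x => //.
  by rewrite con_sym connect1 ?Qr.
split; last first.
  apply/setP => z; rewrite inE; apply/bigcupP/idP => [[_ /imsetP[x Qx ->]] | Qz].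
    by rewrite !inE => /orP[] /eqP-> //; apply: Qf.
  by exists [set z; f z]; [apply: imset_f | rewrite !inE eqxx].
split=> [|e e' x y Me Me' ex e'y]; last first.
  have [x' Qx' xx'] := mem_edge e x Me ex.
  have [y' Qy' yy'] := mem_edge e' y Me' e'y.
  by rewrite (connect_trans xx') // (connect_trans (Q_conn _ _ Qx' Qy')) // con_sym.
split=> [e /imsetP[x Qx ->] | ]; first by exists x, (f x); rewrite f_neq Qr.
apply/trivIsetP => _ _ /imsetP[x Qx ->] /imsetP[y Qy ->] neq_xy.
rewrite -setI_eq0; apply/eqP/setP => z; rewrite !inE; apply/negP.
case/andP=> /orP[] /eqP zx /orP[] /eqP zy; move: neq_xy; subst z.
- by rewrite zy eqxx.
- by rewrite zy fK setUC eqxx.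
- by rewrite -zy fK setUC eqxx.
- by rewrite -[x]fK zy fK eqxx.
Qed.

End Graph.

Lemma eq_connected_matching (T : finType) (r1 r2 : rel T) M : r1 =2 r2 ->
  connected_matching r1 M -> connected_matching r2 M.
Proof.
move=> r12 [[edges triv] conn]; split; [split|] => //.
  by move=> e /edges[x [y [xy rxy ->]]]; exists x, y; rewrite -r12.
by move=> e f x y Me Mf ex fy; rewrite -(eq_connect r12); apply: conn Me Mf ex fy.
Qed.

Lemma eq_connected_edges (T : finType) (r1 r2 : rel T) : r1 =2 r2 ->
  connected_edges r1 -> connected_edges r2.
Proof.
by move=> r12 conn x y u v; rewrite -!r12 -(eq_connect r12); apply: conn.
Qed.

Lemma crosswise_neq (I : eqType) (a b c d : I) : a != b -> c != d ->
  ((a != c) && (b != d)) || ((a != d) && (b != c)).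
Proof.
move=> ab cd; have [ac|_] := eqVneq a c; have [bd|_] := eqVneq b d => //=; subst.
all: by move=> *; apply/andP; split; rewrite // eq_sym.
Qed.

Lemma third_part (i j : 'I_3) : exists l : 'I_3, (l != i) && (l != j).
Proof.
have : 0 < #|~: [set i; j]|.
  by have := cardsC [set i; j]; rewrite card_ord cards2; case: (i != j) => /=; lia.
by case/card_gt0P=> l; rewrite !inE negb_or; exists l.
Qed.

Section Colouring.
Variables (T : finType) (part : T -> 'I_3) (c : T -> T -> bool).
Hypothesis c_sym : forall x y, c x y = c y x.

Local Notation red := (red_rel part c).
Local Notation blue := (blue_rel part c).

Definition matching_cover (R B : {set {set T}}) :=
  [/\ connected_matching red R, connected_matching blue B,
      [disjoint cover R & cover B] & cover R :|: cover B = [set: T]].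

Lemma red_sym : symmetric red.
Proof. by move=> x y; rewrite /red_rel /tri_adj eq_sym c_sym. Qed.

Lemma blue_sym : symmetric blue.
Proof. by move=> x y; rewrite /blue_rel /tri_adj eq_sym c_sym. Qed.

Lemma matching_cover_of_pairing f : pairing part f ->
  (forall x y, c x (f x) -> c y (f y) -> connect red x y) ->
  (forall x y, ~~ c x (f x) -> ~~ c y (f y) -> connect blue x y) ->
  exists R B, matching_cover R B.
Proof.
move=> [fK f_part] red_conn blue_conn.
have f_neq x : x != f x by apply: pairing_neq.
have red_f x : c x (f x) -> c (f x) (f (f x)) by rewrite fK c_sym.
have blue_f x : ~~ c x (f x) -> ~~ c (f x) (f (f x)) by rewrite fK c_sym.
have red_pair x : c x (f x) -> red x (f x) by rewrite /red_rel /tri_adj f_part.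
have blue_pair x : ~~ c x (f x) -> blue x (f x) by rewrite /blue_rel /tri_adj f_part.
have [red_match red_cover] :=
  connected_matching_of_involution red_sym fK f_neq red_f red_pair red_conn.
have [blue_match blue_cover] :=
  connected_matching_of_involution blue_sym fK f_neq blue_f blue_pair blue_conn.
eexists; eexists; split; [exact: red_match | exact: blue_match | |].
  rewrite red_cover blue_cover -setI_eq0; apply/eqP/setP => z.
  by rewrite !inE andbN.
by rewrite red_cover blue_cover; apply/setP => z; rewrite !inE orbN.
Qed.

Lemma pairing_swap f a e : pairing part f ->
  part a != part e -> part (f a) != part (f e) ->
  c a (f a) -> ~~ c a e -> ~~ c (f a) (f e) ->
  exists2 g, pairing part g & #|[set x | c x (g x)]| < #|[set x | c x (f x)]|.
Proof.
move=> [fK f_part] part_ae part_fafe red_a blue_ae blue_fafe.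
have neq_a_fa : a != f a by apply: pairing_neq.
have neq_e_fe : e != f e by apply: pairing_neq.
have neq_ae : a != e by apply: contraNneq part_ae => ->.
have neq_fafe : f a != f e by apply: contraNneq part_fafe => ->.
have neq_fa_e : f a != e by apply: contraNneq blue_ae => <-.
have neq_a_fe : a != f e by apply: contra_neq neq_fa_e => ->; rewrite fK.
(* Conjugating f by the transposition (f a, e) re-pairs a with e and f a with f e. *)
pose t := tperm (f a) e; pose g x := t (f (t x)).
have g_a : g a = e by rewrite /g /t (tpermD (z := a)) 1?eq_sym // tpermL.
have g_fa : g (f a) = f e by rewrite /g /t tpermL tpermD // eq_sym.
have g_e : g e = a by rewrite /g /t tpermR fK tpermD // eq_sym.
have g_fe : g (f e) = f a by rewrite /g /t (tpermD (z := f e)) // fK tpermR.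
have g_out x : x \notin [:: a; f a; e; f e] -> g x = f x.
  rewrite !inE => /norP[xa /norP[xfa /norP[xe xfe]]].
  rewrite /g /t (tpermD (z := x)) 1?eq_sym // tpermD //.
    by apply: contra_neq xa => /(congr1 f); rewrite !fK.
  by apply: contra_neq xfe => ->; rewrite fK.
have g_in x : x \in [:: a; f a; e; f e] -> ~~ c x (g x).
  by rewrite !inE => /or4P[] /eqP->; rewrite ?g_a ?g_fa ?g_e ?g_fe // c_sym.
exists g; first split.
- by move=> x; rewrite /g tpermK fK tpermK.
- move=> x; have [|/g_out->] := boolP (x \in [:: a; f a; e; f e]) => //.
  rewrite !inE => /or4P[] /eqP->; rewrite ?g_a ?g_fa ?g_e ?g_fe // eq_sym //.
apply: proper_card; apply/properP; split; last by exists a; rewrite !inE ?g_a.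
apply/subsetP => x; rewrite !inE.
by have [/g_in/negbTE->|/g_out->] := boolP (x \in [:: a; f a; e; f e]).
Qed.

Lemma pairing_join_red f a e : pairing part f ->
  c a (f a) -> c e (f e) -> ~~ connect red a e ->
  exists2 g, pairing part g & #|[set x | c x (g x)]| < #|[set x | c x (f x)]|.
Proof.
move=> pf red_a red_e nconn; have [fK f_part] := pf.
have red_con_sym := sym_connect_sym red_sym.
have red_pair x : c x (f x) -> connect red x (f x).
  by move=> cx; rewrite connect1 // /red_rel /tri_adj f_part.
have blue_between u v : connect red a u -> connect red v e -> part u != part v -> ~~ c u v.
  move=> au ve puv; apply: contra nconn => cuv.
  by rewrite (connect_trans au) // (connect_trans _ ve) // connect1 // /red_rel /tri_adj puv.
have pair_a := red_pair a red_a; have pair_e := red_pair e red_e.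
have [/andP[p1 p2] | /andP[p1 p2]] := orP (crosswise_neq (f_part a) (f_part e)).
  by apply: (pairing_swap pf p1 p2 red_a); apply: blue_between;
    rewrite // red_con_sym.
have p2' : part (f a) != part (f (f e)) by rewrite fK.
by apply: (pairing_swap pf p1 p2' red_a); apply: blue_between; rewrite ?fK // red_con_sym.
Qed.

Lemma matching_cover_of_blue_edges f : pairing part f -> connected_edges blue ->
  exists R B, matching_cover R B.
Proof.
move=> pf blue_edges; have [n] := ubnP #|[set x | c x (f x)]|.
elim: n f pf => // n IH f pf lt_n.
have [red_conn | ] :=
  boolP [forall x, forall y, (c x (f x) && c y (f y)) ==> connect red x y].
  apply: (matching_cover_of_pairing pf) => [x y cx cy | x y cx cy].
    by move/forallP: red_conn => /(_ x) /forallP /(_ y); rewrite cx cy.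
  have [_ f_part] := pf.
  by apply: (blue_edges x (f x) y (f y)); rewrite /blue_rel /tri_adj f_part ?cx ?cy.
case/forallPn=> a /forallPn[e]; rewrite negb_imply => /andP[/andP[red_a red_e] nconn].
have [g pg lt_gf] := pairing_join_red pf red_a red_e nconn.
by apply: (IH g pg); apply: leq_trans lt_gf _.
Qed.

Lemma blue_connect_of_red_split a b e d :
  (forall i : 'I_3, exists x, part x = i) ->
  red a b -> red e d -> ~~ connect red a e -> forall u v, connect blue u v.
Proof.
move=> part_surj rab red_ed nae.
have blue_con_sym := sym_connect_sym blue_sym.
pose inA := connect red a.
have cross x y : inA x -> ~~ inA y -> part x != part y -> connect blue x y.
  move=> Ax Ay pxy; apply: connect1; rewrite /blue_rel /tri_adj pxy /=.
  apply: contra Ay => cxy; apply: connect_trans Ax _.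
  by apply: connect1; rewrite /red_rel /tri_adj pxy.
have inA_a : inA a := connect0 _ _.
have inA_e : ~~ inA e := nae.
have inA_d : ~~ inA d.
  apply: contra nae => ad; apply: connect_trans ad _.
  by rewrite (sym_connect_sym red_sym) connect1.
have other_inA i : exists2 x, inA x & part x != i.
  have [<-|ai] := eqVneq (part a) i; last by exists a.
  by exists b; [apply: connect1 | rewrite eq_sym; case/andP: rab].
have other_notA i : exists2 y, ~~ inA y & part y != i.
  have [<-|ei] := eqVneq (part e) i; last by exists e.
  by exists d; [ | rewrite eq_sym; case/andP: red_ed].
have cross_connect u v : inA u -> ~~ inA v -> connect blue u v.
  move=> Au Av; have [puv|] := eqVneq (part u) (part v); last exact: cross.
  have [x Ax px] := other_inA (part u); have [y Ay py] := other_notA (part u).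
  have uy : connect blue u y by apply: cross; rewrite // eq_sym.
  have xv : connect blue x v by apply: cross; rewrite // -puv.
  have [pxy|] := eqVneq (part x) (part y).
    have [l /andP[lu lx]] := third_part (part u) (part x).
    have [w pw] := part_surj l; rewrite -pw in lu lx.
    have [Aw|Aw] := boolP (inA w).
      have wv : connect blue w v by apply: cross; rewrite // -puv.
      have yw : connect blue y w by rewrite blue_con_sym cross // -pxy.
      exact: connect_trans uy (connect_trans yw wv).
    have uw : connect blue u w by rewrite cross // eq_sym.
    have wx : connect blue w x by rewrite blue_con_sym cross // eq_sym.
    exact: connect_trans uw (connect_trans wx xv).
  by move=> nxy; rewrite (connect_trans uy) // (connect_trans _ xv) // blue_con_sym cross.
have to_a u : connect blue u a.
  have [Au|Au] := boolP (inA u); last by rewrite blue_con_sym cross_connect.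
  by rewrite (connect_trans (cross_connect _ _ Au inA_e)) // blue_con_sym cross_connect.
by move=> u v; rewrite (connect_trans (to_a u)) // blue_con_sym.
Qed.
End Colouring.

Lemma matching_cover_negb (T : finType) (part : T -> 'I_3) (c : T -> T -> bool) R B :
  matching_cover part (fun x y => ~~ c x y) R B -> matching_cover part c B R.
Proof.
have red_blue : red_rel part (fun x y => ~~ c x y) =2 blue_rel part c by [].
have blue_red : blue_rel part (fun x y => ~~ c x y) =2 red_rel part c.
  by move=> x y; rewrite /blue_rel /red_rel negbK.
case=> red_R blue_B disj cov; split.
- exact: eq_connected_matching blue_red blue_B.
- exact: eq_connected_matching red_blue red_R.
- by rewrite disjoint_sym.
- by rewrite setUC.
Qed.

Theorem lemma4p1 (T : finType) (part : T -> 'I_3) (c : T -> T -> bool) :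
  (forall i : 'I_3, exists x : T, part x = i) ->
  (forall i : 'I_3, 2 * #|[set x | part x == i]| <= #|T|) ->
  ~~ odd #|T| ->
  (forall x y, c x y = c y x) ->
  exists R B : {set {set T}},
    [/\ connected_matching (red_rel part c) R,
        connected_matching (blue_rel part c) B,
        [disjoint cover R & cover B] &
        cover R :|: cover B = [set: T]].
Proof.
move=> part_surj fair even_T c_sym.
have [f pf] := fair_pairing fair even_T.
have [red_edges | [a [b [e [d [rab red_ed nae]]]]]] := connected_edgesPn (red_rel part c).
  have nc_sym x y : ~~ c x y = ~~ c y x by rewrite c_sym.
  have blue_edges : connected_edges (blue_rel part (fun x y => ~~ c x y)).
    by apply: eq_connected_edges red_edges => x y; rewrite /blue_rel negbK.
  have [R [B cov]] := matching_cover_of_blue_edges nc_sym pf blue_edges.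
  by exists B, R; apply: matching_cover_negb.
apply: (matching_cover_of_blue_edges c_sym pf) => x y u v _ _.
exact: blue_connect_of_red_split part_surj rab red_ed nae x u.
Qed.
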